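(* Let $\mathcal{A}=(\mathcal{E},\{M_i\}_{i\in\mathcal{O}})$ be a quantum decision model with Kraus form $\mathcal{E}(\rho)=\sum_jE_j\rho E_j^\dagger$. (1) The Lipschitz constant of $\mathcal{A}$ is \[K^*=\max_{A\subseteq\mathcal{O}}\big[\lambda_{\max}(M_A)-\lambda_{\min}(M_A)\big],\qquad M_A=\sum_{i\in A}\mathcal{E}^\dagger(M_i^\dagger M_i),\] where $\mathcal{E}^\dagger(X)=\sum_jE_j^\dagger XE_j$ and $\lambda_{\max},\lambda_{\min}$ denote the largest and smallest eigenvalues of the positive semidefinite matrix $M_A$ (with $M_\emptyset=0$). (2) Let $A^*\subseteq\mathcal{O}$ attain this maximum, and let $|\psi\rangle,|\phi\rangle$ be normalized eigenvectors of $M_{A^*}$ for its largest and smallest eigenvalues respectively (chosen mutually orthogonal). Then, with $\psi=|\psi\rangle\langle\psi|$ and $\phi=|\phi\rangle\langle\phi|$, \[ d(\mathcal{A}(\psi),\mathcal{A}(\phi))=K^*D(\psi,\phi)=K^*. \]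
   Context: $\mathcal{H}$ is a Hilbert space of finite dimension $N$, $\mathcal{D}(\mathcal{H})$ its density matrices. A quantum decision model $\mathcal{A}=(\mathcal{E},\{M_i\}_{i\in\mathcal{O}})$ consists of a completely positive trace-preserving map $\mathcal{E}$ and a measurement $\{M_i\}_{i\in\mathcal{O}}$ ($\mathcal{O}$ finite, $\sum_iM_i^\dagger M_i=I$) and maps $\rho$ to $\mathcal{A}(\rho)=\{\mathrm{tr}(M_i\mathcal{E}(\rho)M_i^\dagger)\}_{i\in\mathcal{O}}$. $D(\rho,\sigma)=\frac12\mathrm{tr}|\rho-\sigma|$; $d(p,q)=\frac12\sum_i|p_i-q_i|$. The Lipschitz constant $K^*$ of $\mathcal{A}$ is the smallest $K\ge0$ with $d(\mathcal{A}(\rho),\mathcal{A}(\sigma))\le KD(\rho,\sigma)$ for all $\rho,\sigma\in\mathcal{D}(\mathcal{H})$. *)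

(* Scalars: an arbitrary numClosedFieldType C (e.g. the
   complex numbers), matrices 'M[C]_N represent operators on H = C^N. *)
From HB Require Import structures.
From mathcomp Require Import all_boot all_order all_algebra.
Set Implicit Arguments. Unset Strict Implicit. Unset Printing Implicit Defensive.
Import Order.TTheory GRing.Theory Num.Theory.
Local Open Scope ring_scope.

Section QDM.
Variable C : numClosedFieldType.

Definition adj m n (X : 'M[C]_(m, n)) : 'M[C]_(n, m) := map_mx Num.conj (X^T).

Definition is_density N (rho : 'M[C]_N) : Prop :=
  [/\ adj rho = rho,
      (forall v : 'cV[C]_N, 0 <= (adj v *m rho *m v) 0 0)
    & \tr rho = 1].

(* |X| by functional calculus from the spectral decomposition
   X = P^-1 diag(lambda) P (meaningful for normal, e.g. Hermitian, X) *)
Definition absmx N (X : 'M[C]_N) : 'M[C]_N :=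
  invmx (spectralmx X) *m diag_mx (map_mx (fun z => `|z|) (spectral_diag X))
    *m spectralmx X.

Definition trace_dist N (rho sigma : 'M[C]_N) : C :=
  2^-1 * \tr (absmx (rho - sigma)).

Definition tv_dist (O : finType) (p q : O -> C) : C :=
  2^-1 * \sum_(i : O) `|p i - q i|.

Definition kraus_TP N m (E : 'I_m -> 'M[C]_N) : Prop :=
  \sum_(j < m) adj (E j) *m E j = 1%:M.

Definition kraus_map N m (E : 'I_m -> 'M[C]_N) (rho : 'M[C]_N) : 'M[C]_N :=
  \sum_(j < m) E j *m rho *m adj (E j).

Definition kraus_dual N m (E : 'I_m -> 'M[C]_N) (X : 'M[C]_N) : 'M[C]_N :=
  \sum_(j < m) adj (E j) *m X *m E j.

Definition is_measurement N (O : finType) (M : O -> 'M[C]_N) : Prop :=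
  \sum_(i : O) adj (M i) *m M i = 1%:M.

Definition qdm N m (O : finType) (E : 'I_m -> 'M[C]_N) (M : O -> 'M[C]_N)
  (rho : 'M[C]_N) : O -> C :=
  fun i => \tr (M i *m kraus_map E rho *m adj (M i)).

Definition lipschitz_for N m (O : finType) (E : 'I_m -> 'M[C]_N)
  (M : O -> 'M[C]_N) (K : C) : Prop :=
  forall rho sigma : 'M[C]_N, is_density rho -> is_density sigma ->
    tv_dist (qdm E M rho) (qdm E M sigma) <= K * trace_dist rho sigma.

Definition is_lipschitz_constant N m (O : finType) (E : 'I_m -> 'M[C]_N)
  (M : O -> 'M[C]_N) (K : C) : Prop :=
  [/\ 0 <= K, lipschitz_for E M K &
      forall K', 0 <= K' -> lipschitz_for E M K' -> K <= K'].

(* eigenvalues (with multiplicity) of a normal matrix, from the spectral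
   theorem; largest and smallest of them (real for Hermitian matrices) *)
Definition eigvals N (X : 'M[C]_N) : seq C :=
  [seq spectral_diag X 0 i | i <- enum 'I_N].

Definition lambda_max N (X : 'M[C]_N) : C :=
  \big[Num.max/(eigvals X)`_0]_(x <- eigvals X) x.

Definition lambda_min N (X : 'M[C]_N) : C :=
  \big[Num.min/(eigvals X)`_0]_(x <- eigvals X) x.

Definition M_set N m (O : finType) (E : 'I_m -> 'M[C]_N) (M : O -> 'M[C]_N)
  (A : {set O}) : 'M[C]_N :=
  \sum_(i in A) kraus_dual E (adj (M i) *m M i).

(* max over A subset O of lambda_max(M_A) - lambda_min(M_A)
   (all these values are >= 0, so 0 is a neutral start) *)
Definition Kformula N m (O : finType) (E : 'I_m -> 'M[C]_N)
  (M : O -> 'M[C]_N) : C :=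
  \big[Num.max/0]_(A : {set O})
     (lambda_max (M_set E M A) - lambda_min (M_set E M A)).

Definition proj_ket N (v : 'cV[C]_N) : 'M[C]_N := v *m adj v.

End QDM.

From HB Require Import structures.
From mathcomp Require Import all_boot all_order all_algebra.
Import Order.TTheory GRing.Theory Num.Theory.
Local Open Scope ring_scope.
Set Implicit Arguments. Unset Strict Implicit. Unset Printing Implicit Defensive.

(* The model is affine in the state: A(rho)_i = tr (F_i rho) with
   F_i = E^dagger(M_i^dagger M_i) Hermitian and summing to the identity.  For a
   traceless Hermitian Delta = rho - sigma the numbers x_i = tr (F_i Delta) are
   real with zero sum, so d(A(rho), A(sigma)) = 1/2 sum_i |x_i| is the largest
   partial sum sum_(i in A) x_i = tr (M_A Delta).  In an eigenbasis of Delta,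
   tr (M_A Delta) weights Rayleigh quotients of M_A, which lie in
   [lambda_min, lambda_max], by the eigenvalues of Delta, which sum to 0 and
   whose moduli sum to 2 D(rho, sigma); hence tr (M_A Delta) <=
   (lambda_max - lambda_min)(M_A) D(rho, sigma).  Conversely the pure states on
   an extremal pair of orthonormal eigenvectors of M_A are at trace distance 1
   and realise tr (M_A Delta) = lambda_max - lambda_min, so no smaller constant
   works. *)

Lemma mxtrace_sum (R : pzRingType) n I (r : seq I) (P : pred I) (F : I -> 'M[R]_n) :
  \tr (\sum_(i <- r | P i) F i) = \sum_(i <- r | P i) \tr (F i).
Proof. exact: raddf_sum. Qed.

Lemma mxtraceB (R : pzRingType) n (X Y : 'M[R]_n) : \tr (X - Y) = \tr X - \tr Y.
Proof. exact: raddfB. Qed.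

Section Adjoint.
Variable C : numClosedFieldType.

Lemma adjE m n (X : 'M[C]_(m, n)) i j : adj X i j = (X j i)^*.
Proof. by rewrite !mxE. Qed.

Lemma adjK m n (X : 'M[C]_(m, n)) : adj (adj X) = X.
Proof. by apply/matrixP => i j; rewrite !adjE conjCK. Qed.

Lemma adjM m n p (X : 'M[C]_(m, n)) (Y : 'M[C]_(n, p)) :
  adj (X *m Y) = adj Y *m adj X.
Proof. by rewrite /adj trmx_mul map_mxM. Qed.

Lemma adj0 m n : adj (0 : 'M[C]_(m, n)) = 0.
Proof. by rewrite /adj trmx0 map_mx0. Qed.

Lemma adjD m n (X Y : 'M[C]_(m, n)) : adj (X + Y) = adj X + adj Y.
Proof. by rewrite /adj linearD map_mxD. Qed.

Lemma adjB m n (X Y : 'M[C]_(m, n)) : adj (X - Y) = adj X - adj Y.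
Proof. by rewrite /adj linearB map_mxB. Qed.

Lemma adj_sum m n I (r : seq I) (P : pred I) (F : I -> 'M[C]_(m, n)) :
  adj (\sum_(i <- r | P i) F i) = \sum_(i <- r | P i) adj (F i).
Proof. exact: (big_morph _ (@adjD m n) (adj0 m n)). Qed.

Lemma adj_delta m n (i : 'I_m) (j : 'I_n) :
  adj (delta_mx i j : 'M[C]_(m, n)) = delta_mx j i.
Proof. by rewrite /adj trmx_delta map_delta_mx. Qed.

Lemma mxtrace_adj n (X : 'M[C]_n) : \tr (adj X) = (\tr X)^*.
Proof. by rewrite /mxtrace rmorph_sum; apply: eq_bigr => i _; rewrite adjE. Qed.

Lemma hermitian_mxtrace_mul_real n (X Y : 'M[C]_n) :
  adj X = X -> adj Y = Y -> \tr (X *m Y) \is Num.real.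
Proof.
by move=> hX hY; rewrite CrealE -mxtrace_adj adjM hX hY mxtrace_mulC.
Qed.

End Adjoint.

Section RealBigMaxMin.
Variables (R : numDomainType) (I : eqType) (x0 : R) (f : I -> R).
Hypotheses (x0_real : x0 \is Num.real) (f_real : forall i, f i \is Num.real).
Implicit Type r : seq I.

Lemma real_bigmax_ge_id r : x0 <= \big[Num.max/x0]_(i <- r) f i.
Proof.
elim: r => [|i r IH]; rewrite ?big_nil // big_cons.
by rewrite comparable_le_max ?real_comparable ?bigmax_real // IH orbT.
Qed.

Lemma real_le_bigmax r i : i \in r -> f i <= \big[Num.max/x0]_(j <- r) f j.
Proof.
elim: r => // j r IH; rewrite inE big_cons.
rewrite comparable_le_max ?real_comparable ?bigmax_real //.
by case/predU1P => [->|/IH ->]; rewrite ?lexx ?orbT.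
Qed.

Lemma real_bigmin_le r i : i \in r -> \big[Num.min/x0]_(j <- r) f j <= f i.
Proof.
elim: r => // j r IH; rewrite inE big_cons.
rewrite comparable_ge_min ?real_comparable ?bigmin_real //.
by case/predU1P => [->|/IH ->]; rewrite ?lexx ?orbT.
Qed.

End RealBigMaxMin.

Section BigMaxMinMem.
Variables (R : numDomainType) (I : Type) (x0 : R) (f : I -> R).

Lemma bigmax_mem r : \big[Num.max/x0]_(i <- r) f i \in x0 :: map f r.
Proof.
elim: r => [|i r IH]; rewrite ?big_nil ?mem_head // big_cons maxEle.
case: ifP => _; last by rewrite !inE eqxx orbT.
by move: IH; rewrite !inE => /orP[->|->]; rewrite ?orbT.
Qed.

Lemma bigmin_mem r : \big[Num.min/x0]_(i <- r) f i \in x0 :: map f r.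
Proof.
elim: r => [|i r IH]; rewrite ?big_nil ?mem_head // big_cons minEle.
case: ifP => _; first by rewrite !inE eqxx orbT.
by move: IH; rewrite !inE => /orP[->|->]; rewrite ?orbT.
Qed.

End BigMaxMinMem.

Section HermitianSpectral.
Variables (C : numClosedFieldType) (n : nat).
Implicit Types (X D : 'M[C]_n).

Lemma spectralmx_unitary X : spectralmx X *m adj (spectralmx X) = 1%:M.
Proof. exact/unitarymxP/spectral_unitarymx. Qed.

Lemma spectralmx_unitaryV X : adj (spectralmx X) *m spectralmx X = 1%:M.
Proof. exact/mulmx1C/spectralmx_unitary. Qed.

Lemma hermitian_spectralE X : adj X = X ->
  X = adj (spectralmx X) *m diag_mx (spectral_diag X) *m spectralmx X.
Proof.
move=> hX; have -> : adj (spectralmx X) = invmx (spectralmx X).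
  by rewrite invmx_unitary ?spectral_unitarymx.
by apply/orthomx_spectralP/normalmxP; change (X *m adj X = adj X *m X); rewrite hX.
Qed.

Lemma hermitian_diag_spectralE X : adj X = X ->
  diag_mx (spectral_diag X) = spectralmx X *m X *m adj (spectralmx X).
Proof.
move=> /hermitian_spectralE hXe; have U1 := spectralmx_unitary X.
move: hXe U1; set U := spectralmx X; set d := spectral_diag X => -> U1.
by rewrite !mulmxA U1 mul1mx -mulmxA U1 mulmx1.
Qed.

Lemma hermitian_eigval_real X k : adj X = X -> spectral_diag X 0 k \is Num.real.
Proof.
move=> hX; have /matrixP/(_ k k) := hermitian_diag_spectralE hX.
rewrite mxE eqxx mulr1n => ->; rewrite CrealE -adjE.
by rewrite !adjM adjK hX mulmxA.
Qed.

Lemma mxtrace_absmx X : \tr (absmx X) = \sum_k `|spectral_diag X 0 k|.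
Proof.
rewrite /absmx mxtrace_mulC mulmxA mulmxV ?spectral_unit // mul1mx mxtrace_diag.
by apply: eq_bigr => k _; rewrite mxE.
Qed.

Lemma spectral_row_orthonormal X a b :
  row a (spectralmx X) *m adj (row b (spectralmx X)) = if a == b then 1%:M else 0.
Proof.
rewrite !rowE adjM adj_delta mulmxA -(mulmxA _ (spectralmx X)).
rewrite spectralmx_unitary mulmx1 mul_delta_mx_cond.
by case: eqP => _; apply/matrixP => i j; rewrite !ord1 !mxE.
Qed.

Lemma hermitian_spectral_eigvec X k : adj X = X ->
  X *m adj (row k (spectralmx X)) =
    spectral_diag X 0 k *: adj (row k (spectralmx X)).
Proof.
move=> hX; have hXe := hermitian_spectralE hX; have U1 := spectralmx_unitary X.
move: hXe U1; set U := spectralmx X; set d := spectral_diag X => -> U1.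
rewrite rowE adjM adj_delta -!mulmxA (mulmxA U) U1 mul1mx scalemxAr.
congr (_ *m _); apply/matrixP => i j; rewrite ord1 mul_diag_mx !mxE.
by case: eqP => [->|]; rewrite ?mulr1 ?mulr0.
Qed.

End HermitianSpectral.

Lemma half_mulr2n (R : numFieldType) (s : R) : 2^-1 * (s *+ 2) = s.
Proof. by rewrite -(mulr_natl s 2) mulrA mulVf ?mul1r ?pnatr_eq0. Qed.

Lemma big_setC_split (R : nmodType) (I : finType) (A : {set I}) (F : I -> R) :
  \sum_i F i = \sum_(i in A) F i + \sum_(i in ~: A) F i.
Proof.
by rewrite (bigID (mem A)) /=; congr (_ + _); apply: eq_bigl => i; rewrite in_setC.
Qed.

Section ZeroSumReal.
Variables (R : numFieldType) (I : finType) (x : I -> R).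
Hypotheses (x_real : forall i, x i \is Num.real) (sum_x : \sum_i x i = 0).

Lemma sum_setC_zero_sum (A : {set I}) : \sum_(i in ~: A) x i = - \sum_(i in A) x i.
Proof. by apply/eqP; rewrite -addr_eq0 addrC -(big_setC_split A) sum_x. Qed.

Lemma sum_le_half_sum_norm (A : {set I}) :
  \sum_(i in A) x i <= 2^-1 * \sum_i `|x i|.
Proof.
rewrite -[leLHS]half_mulr2n ler_wpM2l ?invr_ge0 ?ler0n // (big_setC_split A) mulr2n.
apply: lerD; first by apply: ler_sum => i _; exact: real_ler_norm.
rewrite -[leLHS]opprK -sum_setC_zero_sum -sumrN ler_sum // => i _.
by rewrite -normrN real_ler_norm ?realN.
Qed.

Lemma half_sum_norm_attained :
  exists A : {set I}, 2^-1 * \sum_i `|x i| = \sum_(i in A) x i.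
Proof.
exists [set i | 0 <= x i]; set A := [set i | _].
rewrite -[RHS]half_mulr2n (big_setC_split A) mulr2n; congr (_ * (_ + _)).
  by apply: eq_bigr => i; rewrite inE => /ger0_norm.
rewrite -[RHS]opprK -sum_setC_zero_sum -sumrN; apply: eq_bigr => i.
by rewrite !inE => x_lt0; rewrite ltr0_norm // real_ltNge ?x_lt0.
Qed.

Lemma sum_mul_zero_sum_le (a : I -> R) lo hi : (forall i, lo <= a i <= hi) ->
  \sum_i a i * x i <= (hi - lo) * (2^-1 * \sum_i `|x i|).
Proof.
move=> a_in; have -> : \sum_i a i * x i = \sum_i (a i - lo) * x i.
  by under [RHS]eq_bigr do rewrite mulrBl; rewrite sumrB -mulr_sumr sum_x mulr0 subr0.
rewrite mulrCA -[leLHS]half_mulr2n ler_wpM2l ?invr_ge0 ?ler0n //.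
have -> : \sum_i `|x i| = \sum_i (x i + `|x i|) by rewrite big_split /= sum_x add0r.
rewrite mulr_sumr -sumrMnl; apply: ler_sum => i _.
have /andP[lo_a a_hi] := a_in i; have a_lo_ge0 : 0 <= a i - lo by rewrite subr_ge0.
case: (real_ge0P (x_real i)) => x_sign.
  by rewrite -mulr2n -mulrnAr ler_wpM2r ?mulrn_wge0 ?lerD2r.
by rewrite subrr mulr0 mulrn_wle0 // mulr_ge0_le0 // ltW.
Qed.

End ZeroSumReal.

Definition spread (C : numClosedFieldType) n (X : 'M[C]_n) : C :=
  lambda_max X - lambda_min X.

Section ExtremalEigenvalues.
Variables (C : numClosedFieldType) (n : nat).
Implicit Types (X D : 'M[C]_n).

(* [(eigvals X)`_0] seeds [lambda_max] and [lambda_min]; it is [0] when [n = 0]. *)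
Lemma eigvals_nth0_real X : adj X = X -> (eigvals X)`_0 \is Num.real.
Proof.
move=> hX; have [size_gt0|size_le0] := ltnP 0 (size (eigvals X)).
  by have /mapP[k _ ->] := mem_nth 0 size_gt0; exact: hermitian_eigval_real.
by rewrite nth_default.
Qed.

Lemma lambda_maxE X :
  lambda_max X = \big[Num.max/(eigvals X)`_0]_(k <- enum 'I_n) spectral_diag X 0 k.
Proof. by rewrite /lambda_max big_map. Qed.

Lemma lambda_minE X :
  lambda_min X = \big[Num.min/(eigvals X)`_0]_(k <- enum 'I_n) spectral_diag X 0 k.
Proof. by rewrite /lambda_min big_map. Qed.

Lemma lambda_max_ge X k : adj X = X -> spectral_diag X 0 k <= lambda_max X.
Proof.
move=> hX; rewrite lambda_maxE real_le_bigmax ?mem_enum ?eigvals_nth0_real //.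
by move=> i; exact: hermitian_eigval_real.
Qed.

Lemma lambda_min_le X k : adj X = X -> lambda_min X <= spectral_diag X 0 k.
Proof.
move=> hX; rewrite lambda_minE real_bigmin_le ?mem_enum ?eigvals_nth0_real //.
by move=> i; exact: hermitian_eigval_real.
Qed.

Lemma spread_real X : adj X = X -> spread X \is Num.real.
Proof.
move=> hX; have eig_real i := hermitian_eigval_real i hX.
by rewrite realB // (lambda_maxE, lambda_minE) (bigmax_real, bigmin_real)
  ?eigvals_nth0_real.
Qed.

Lemma eigvals_nth0_mem X : (0 < n)%N -> (eigvals X)`_0 \in eigvals X.
Proof. by move=> n_gt0; rewrite mem_nth // size_map size_enum_ord. Qed.

Lemma lambda_max_eigval X : (0 < n)%N -> exists k, lambda_max X = spectral_diag X 0 k.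
Proof.
move=> n_gt0; suff /mapP[k _ ->] : lambda_max X \in eigvals X by exists k.
rewrite /lambda_max; have := bigmax_mem (eigvals X)`_0 id (eigvals X).
by rewrite map_id inE => /predU1P[->|//]; exact: eigvals_nth0_mem.
Qed.

Lemma lambda_min_eigval X : (0 < n)%N -> exists k, lambda_min X = spectral_diag X 0 k.
Proof.
move=> n_gt0; suff /mapP[k _ ->] : lambda_min X \in eigvals X by exists k.
rewrite /lambda_min; have := bigmin_mem (eigvals X)`_0 id (eigvals X).
by rewrite map_id inE => /predU1P[->|//]; exact: eigvals_nth0_mem.
Qed.

Lemma row_diag_quadE (b d : 'rV[C]_n) :
  (b *m diag_mx d *m adj b) 0 0 = \sum_k d 0 k * `|b 0 k| ^+ 2.
Proof.
by rewrite mul_mx_diag !mxE; apply: eq_bigr => k _; rewrite !mxE normCK mulrAC mulrC.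
Qed.

Lemma row_normE (b : 'rV[C]_n) : (b *m adj b) 0 0 = \sum_k `|b 0 k| ^+ 2.
Proof. by rewrite mxE; apply: eq_bigr => k _; rewrite !mxE normCK. Qed.

Lemma row_quadE p (A : 'M[C]_(p, n)) B k :
  (row k A *m B *m adj (row k A)) 0 0 = (A *m B *m adj A) k k.
Proof.
rewrite -row_mul !mxE; apply: eq_bigr => j _; rewrite !mxE.
by congr (_ * _); apply: eq_bigr => l _; rewrite !mxE.
Qed.

Lemma rayleigh_bounds X (c : 'rV[C]_n) : adj X = X -> c *m adj c = 1%:M ->
  lambda_min X <= (c *m X *m adj c) 0 0 <= lambda_max X.
Proof.
move=> hX c_unit; have hXe := hermitian_spectralE hX; have U1 := spectralmx_unitaryV X.
move: hXe U1; set U := spectralmx X; set d := spectral_diag X => hXe U1.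
set b := c *m adj U.
have -> : c *m X *m adj c = b *m diag_mx d *m adj b by rewrite hXe /b adjM adjK !mulmxA.
have b_unit : \sum_k `|b 0 k| ^+ 2 = 1.
  by rewrite -row_normE /b adjM adjK mulmxA -(mulmxA c) U1 mulmx1 c_unit mxE.
rewrite row_diag_quadE -[lambda_min X]mulr1 -[lambda_max X]mulr1 -b_unit !mulr_sumr.
apply/andP; split; apply: ler_sum => k _; apply: ler_wpM2r; rewrite ?exprn_ge0 //.
  exact: lambda_min_le.
exact: lambda_max_ge.
Qed.

Lemma mxtrace_mul_le_spread X D : adj X = X -> adj D = D -> \tr D = 0 ->
  \tr (X *m D) <= spread X * (2^-1 * \tr (absmx D)).
Proof.
move=> hX hD trD0; rewrite mxtrace_absmx.
have hDe := hermitian_spectralE hD; have U1 := spectralmx_unitary D.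
move: hDe U1 trD0; set U := spectralmx D; set d := spectral_diag D => hDe U1.
have -> : \tr (X *m D) = \sum_k (row k U *m X *m adj (row k U)) 0 0 * d 0 k.
  rewrite hDe !mulmxA mxtrace_mulC !mulmxA mul_mx_diag /mxtrace.
  by apply: eq_bigr => k _; rewrite row_quadE mxE.
rewrite hDe mxtrace_mulC mulmxA U1 mul1mx mxtrace_diag => sum_d0.
apply: (sum_mul_zero_sum_le _ sum_d0) => [k|k].
  exact: hermitian_eigval_real.
by apply: rayleigh_bounds hX _; rewrite spectral_row_orthonormal eqxx.
Qed.

Lemma extremal_eigvecs X : (0 < n)%N -> adj X = X -> lambda_max X != lambda_min X ->
  exists psi phi : 'cV[C]_n, [/\ X *m psi = lambda_max X *: psi,
    X *m phi = lambda_min X *: phi, adj psi *m psi = 1%:M, adj phi *m phi = 1%:M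
    & adj phi *m psi = 0].
Proof.
move=> n_gt0 hX; have [a ->] := lambda_max_eigval X n_gt0.
have [b ->] := lambda_min_eigval X n_gt0; have [->|a_neq_b _] := eqVneq a b.
  by rewrite eqxx.
have ket_dot i j : adj (adj (row i (spectralmx X))) *m adj (row j (spectralmx X)) =
    if i == j then 1%:M else 0.
  by rewrite adjK spectral_row_orthonormal.
exists (adj (row a (spectralmx X))), (adj (row b (spectralmx X))).
by rewrite !hermitian_spectral_eigvec // !ket_dot !eqxx eq_sym (negbTE a_neq_b).
Qed.

End ExtremalEigenvalues.

Lemma normr_cube_fixed (R : numDomainType) (z : R) : z * z * z = z -> `|z| = z * z.
Proof.
move=> z3; have /eqP : z * (z * z - 1) = 0 by rewrite mulrBr mulr1 mulrA z3 subrr.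
rewrite mulf_eq0 subr_eq0 => /orP[/eqP->|/eqP zz1]; first by rewrite normr0 mulr0.
have : `|z| ^+ 2 == 1 by rewrite expr2 -normrM zz1 normr1.
rewrite zz1 sqrf_eq1 => /orP[/eqP //|/eqP z_m1].
by have := normr_ge0 z; rewrite z_m1 ler0N1.
Qed.

Section PureStates.
Variables (C : numClosedFieldType) (N : nat).
Implicit Types (v psi phi : 'cV[C]_N).

Lemma mxtrace_absmx_cube_fixed (D : 'M[C]_N) : adj D = D -> D *m D *m D = D ->
  \tr (absmx D) = \tr (D *m D).
Proof.
move=> hD D3; rewrite mxtrace_absmx.
have Dd := hermitian_diag_spectralE hD; have U1 := spectralmx_unitaryV D.
move: Dd U1; set U := spectralmx D; set d := spectral_diag D => Dd U1.
have conjM (A B : 'M[C]_N) : U *m A *m adj U *m (U *m B *m adj U) = U *m (A *m B) *m adj U.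
  by rewrite !mulmxA -(mulmxA _ (adj U)) U1 mulmx1.
have dd : diag_mx d *m diag_mx d = U *m (D *m D) *m adj U by rewrite Dd conjM.
have d3 k : d 0 k * d 0 k * d 0 k = d 0 k.
  have /matrixP/(_ k k) : diag_mx d *m diag_mx d *m diag_mx d = diag_mx d.
    by rewrite dd {1}Dd conjM D3 -Dd.
  by rewrite !mulmx_diag !mxE eqxx !mulr1n.
have -> : \tr (D *m D) = \tr (U *m (D *m D) *m adj U).
  by rewrite [RHS]mxtrace_mulC (mulmxA (adj U)) U1 mul1mx.
rewrite -dd mulmx_diag mxtrace_diag.
by apply: eq_bigr => k _; rewrite mxE normr_cube_fixed.
Qed.

Lemma proj_ket_hermitian v : adj (proj_ket v) = proj_ket v.
Proof. by rewrite /proj_ket adjM adjK. Qed.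

Lemma mxtrace_proj_ket v : adj v *m v = 1%:M -> \tr (proj_ket v) = 1.
Proof. by move=> v_unit; rewrite /proj_ket mxtrace_mulC v_unit mxtrace1. Qed.

Lemma proj_ket_density v : adj v *m v = 1%:M -> is_density (proj_ket v).
Proof.
move=> v_unit; split; [exact: proj_ket_hermitian | | exact: mxtrace_proj_ket].
move=> w; rewrite /proj_ket !mulmxA -(mulmxA _ (adj v)).
have -> : adj v *m w = adj (adj w *m v) by rewrite adjM adjK.
by rewrite mxE big_ord1 adjE -normCK exprn_ge0.
Qed.

Lemma mxtrace_mul_proj_eigvec (X : 'M[C]_N) v a :
  X *m v = a *: v -> adj v *m v = 1%:M -> \tr (X *m proj_ket v) = a.
Proof.
move=> Xv v_unit; rewrite /proj_ket mulmxA Xv -scalemxAl mxtraceZ.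
by rewrite mxtrace_proj_ket ?mulr1.
Qed.

Lemma trace_dist_orthogonal_kets psi phi :
  adj psi *m psi = 1%:M -> adj phi *m phi = 1%:M -> adj phi *m psi = 0 ->
  trace_dist (proj_ket psi) (proj_ket phi) = 1.
Proof.
move=> psi_unit phi_unit phi_psi.
have psi_phi : adj psi *m phi = 0 by rewrite -[adj psi *m phi]adjK adjM adjK phi_psi adj0.
have projM a b : proj_ket a *m proj_ket b = a *m (adj a *m b) *m adj b.
  by rewrite /proj_ket !mulmxA.
set P := proj_ket psi; set Q := proj_ket phi; set D := P - Q.
have PP : P *m P = P by rewrite projM psi_unit mulmx1.
have QQ : Q *m Q = Q by rewrite projM phi_unit mulmx1.
have PQ : P *m Q = 0 by rewrite projM psi_phi mulmx0 mul0mx.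
have QP : Q *m P = 0 by rewrite projM phi_psi mulmx0 mul0mx.
have DD : D *m D = P + Q.
  by rewrite mulmxBl !mulmxBr PP QQ PQ QP subr0 sub0r opprK.
have DDD : D *m D *m D = D by rewrite DD mulmxBr !mulmxDl PP QQ PQ QP addr0 add0r.
have hD : adj D = D by rewrite adjB !proj_ket_hermitian.
rewrite /trace_dist -/D mxtrace_absmx_cube_fixed // DD mxtraceD.
by rewrite !mxtrace_proj_ket // -[_ + 1]/(1 *+ 2) half_mulr2n.
Qed.

End PureStates.

Section DecisionModel.
Variables (C : numClosedFieldType) (N m : nat) (E : 'I_m -> 'M[C]_N).
Variables (O : finType) (M : O -> 'M[C]_N).

Definition dual_effect i := kraus_dual E (adj (M i) *m M i).

Lemma qdmE rho i : qdm E M rho i = \tr (dual_effect i *m rho).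
Proof.
rewrite /qdm /kraus_map /dual_effect /kraus_dual mulmx_sumr mulmx_suml mulmx_suml.
rewrite !mxtrace_sum; apply: eq_bigr => j _.
by rewrite mxtrace_mulC !mulmxA mxtrace_mulC !mulmxA.
Qed.

Lemma dual_effect_hermitian i : adj (dual_effect i) = dual_effect i.
Proof.
by rewrite adj_sum; apply: eq_bigr => j _; rewrite !adjM !adjK !mulmxA.
Qed.

Lemma M_set_hermitian (A : {set O}) : adj (M_set E M A) = M_set E M A.
Proof. by rewrite adj_sum; apply: eq_bigr => i _; exact: dual_effect_hermitian. Qed.

Lemma mxtrace_M_set_mul (A : {set O}) D :
  \tr (M_set E M A *m D) = \sum_(i in A) \tr (dual_effect i *m D).
Proof. by rewrite mulmx_suml mxtrace_sum. Qed.

Lemma tv_dist_qdmE rho sigma : tv_dist (qdm E M rho) (qdm E M sigma) =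
  2^-1 * \sum_i `|\tr (dual_effect i *m (rho - sigma))|.
Proof. by congr (_ * _); apply: eq_bigr => i _; rewrite !qdmE mulmxBr mxtraceB. Qed.

Lemma le_Kformula (A : {set O}) : spread (M_set E M A) <= Kformula E M.
Proof.
apply: (real_le_bigmax (f := fun A => spread (M_set E M A))); rewrite ?mem_index_enum //.
by move=> B; rewrite spread_real ?M_set_hermitian.
Qed.

Lemma Kformula_ge0 : 0 <= Kformula E M.
Proof.
apply: (real_bigmax_ge_id (f := fun A => spread (M_set E M A))) => //.
by move=> B; rewrite spread_real ?M_set_hermitian.
Qed.

Lemma Kformula_attained :
  Kformula E M = 0 \/ exists A, Kformula E M = spread (M_set E M A).
Proof.
have := bigmax_mem 0 (fun A => spread (M_set E M A)) (index_enum {set O}).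
by rewrite -/(Kformula E M) inE => /predU1P[|/mapP[A _]] ->; [left | right; exists A].
Qed.

Hypotheses (E_TP : kraus_TP E) (M_meas : is_measurement M).

Lemma sum_dual_effect : \sum_i dual_effect i = 1%:M.
Proof.
rewrite exchange_big /= -E_TP; apply: eq_bigr => j _.
by rewrite -mulmx_suml -mulmx_sumr M_meas mulmx1.
Qed.

Section StateDifference.
Variables rho sigma : 'M[C]_N.
Hypotheses (rho_herm : adj rho = rho) (sigma_herm : adj sigma = sigma).
Hypothesis tr_rho_sigma : \tr rho = \tr sigma.

Let D := rho - sigma.
Let x i := \tr (dual_effect i *m D).

Let x_real i : x i \is Num.real.
Proof.
by rewrite hermitian_mxtrace_mul_real ?dual_effect_hermitian ?adjB ?rho_herm ?sigma_herm.
Qed.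

Let sum_x : \sum_i x i = 0.
Proof.
by rewrite /x -mxtrace_sum -mulmx_suml sum_dual_effect mul1mx mxtraceB tr_rho_sigma subrr.
Qed.

Lemma tv_dist_qdm_attained :
  exists A, tv_dist (qdm E M rho) (qdm E M sigma) = \tr (M_set E M A *m (rho - sigma)).
Proof.
have [A eqA] := half_sum_norm_attained x_real sum_x.
by exists A; rewrite tv_dist_qdmE mxtrace_M_set_mul.
Qed.

Lemma mxtrace_M_set_le_tv_dist A :
  \tr (M_set E M A *m (rho - sigma)) <= tv_dist (qdm E M rho) (qdm E M sigma).
Proof. by rewrite tv_dist_qdmE mxtrace_M_set_mul; exact: sum_le_half_sum_norm. Qed.

End StateDifference.

Lemma qdm_lipschitz : lipschitz_for E M (Kformula E M).
Proof.
move=> rho sigma [rho_herm _ tr_rho] [sigma_herm _ tr_sigma].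
have tr_eq : \tr rho = \tr sigma by rewrite tr_rho tr_sigma.
have [A ->] := tv_dist_qdm_attained rho_herm sigma_herm tr_eq.
have D_herm : adj (rho - sigma) = rho - sigma by rewrite adjB rho_herm sigma_herm.
have trD : \tr (rho - sigma) = 0 by rewrite mxtraceB tr_eq subrr.
apply: le_trans (mxtrace_mul_le_spread (M_set_hermitian A) D_herm trD) _.
apply: ler_wpM2r; last exact: le_Kformula.
by rewrite mulr_ge0 ?invr_ge0 ?ler0n // mxtrace_absmx sumr_ge0.
Qed.

Lemma spread_le_tv_dist_eigvecs A psi phi :
  M_set E M A *m psi = lambda_max (M_set E M A) *: psi ->
  M_set E M A *m phi = lambda_min (M_set E M A) *: phi ->
  adj psi *m psi = 1%:M -> adj phi *m phi = 1%:M ->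
  spread (M_set E M A) <= tv_dist (qdm E M (proj_ket psi)) (qdm E M (proj_ket phi)).
Proof.
move=> psi_max phi_min psi_unit phi_unit.
have tr_eq : \tr (proj_ket psi) = \tr (proj_ket phi) by rewrite !mxtrace_proj_ket.
have := mxtrace_M_set_le_tv_dist (proj_ket_hermitian psi) (proj_ket_hermitian phi) tr_eq A.
rewrite mulmxBr mxtraceB (mxtrace_mul_proj_eigvec psi_max) //.
by rewrite (mxtrace_mul_proj_eigvec phi_min).
Qed.

Lemma Kformula_minimal K : (0 < N)%N -> 0 <= K -> lipschitz_for E M K ->
  Kformula E M <= K.
Proof.
move=> N_gt0 K_ge0 K_lip; case: Kformula_attained => [->//|[A ->]].
set X := M_set E M A; have [eq_ext|neq_ext] := eqVneq (lambda_max X) (lambda_min X).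
  by rewrite /spread eq_ext subrr.
have [psi [phi [psi_max phi_min psi_unit phi_unit phi_psi]]] :=
  extremal_eigvecs N_gt0 (M_set_hermitian A) neq_ext.
apply: le_trans (spread_le_tv_dist_eigvecs psi_max phi_min psi_unit phi_unit) _.
have := K_lip _ _ (proj_ket_density psi_unit) (proj_ket_density phi_unit).
by rewrite trace_dist_orthogonal_kets ?mulr1.
Qed.

End DecisionModel.

Unset Implicit Arguments.

Theorem theorem3 (C : numClosedFieldType) (N : nat) (hN : (0 < N)%N)
  (m : nat) (E : 'I_m -> 'M[C]_N) (O : finType) (M : O -> 'M[C]_N) :
  kraus_TP E -> is_measurement M ->
  (* (1) *)
  is_lipschitz_constant E M (Kformula E M) /\
  (* (2) *)
  (forall (Astar : {set O}) (psi phi : 'cV[C]_N),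
     lambda_max (M_set E M Astar) - lambda_min (M_set E M Astar)
       = Kformula E M ->
     M_set E M Astar *m psi = lambda_max (M_set E M Astar) *: psi ->
     M_set E M Astar *m phi = lambda_min (M_set E M Astar) *: phi ->
     adj psi *m psi = 1%:M -> adj phi *m phi = 1%:M ->
     adj phi *m psi = 0 ->
     tv_dist (qdm E M (proj_ket psi)) (qdm E M (proj_ket phi))
       = Kformula E M * trace_dist (proj_ket psi) (proj_ket phi) /\
     Kformula E M * trace_dist (proj_ket psi) (proj_ket phi) = Kformula E M).
Proof.
move=> E_TP M_meas; have K_lip := qdm_lipschitz E_TP M_meas.
split.
  split; [exact: Kformula_ge0 | exact: K_lip |].
  by move=> K; exact: Kformula_minimal.
move=> A psi phi spread_A psi_max phi_min psi_unit phi_unit phi_psi.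
rewrite trace_dist_orthogonal_kets // mulr1; split => //; apply/le_anti/andP; split.
  have := K_lip _ _ (proj_ket_density psi_unit) (proj_ket_density phi_unit).
  by rewrite trace_dist_orthogonal_kets ?mulr1.
by rewrite -spread_A; exact: spread_le_tv_dist_eigvecs.
Qed.
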